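(* Let $G$ be a connected $d$-regular simple graph of order $n$, where $d\ge 3$, with adjacency eigenvalues $d=\lambda_1>\lambda_2\ge\cdots\ge\lambda_n$. Then \[ \mathscr{K}_e(G)=n(d-1)+\sum_{i=2}^{n}\frac{d}{d-\lambda_i}. \]
   Context: Kemeny's constant of an irreducible finite Markov chain with transition matrix $P$ whose eigenvalues (with multiplicity) are $1=\rho_1,\rho_2,\dots,\rho_N$ (with $1$ simple) is $\mathscr{K}(P)=\sum_{i=2}^{N}\frac{1}{1-\rho_i}$. The edge Kemeny's constant $\mathscr{K}_e(G)$ is Kemeny's constant of the simple random walk on the arcs of $G$: the states are the $2|E(G)|$ arcs $(u,v)$ with $\{u,v\}\in E(G)$, and from arc $(u,v)$ the walk moves to arc $(v,w)$ with probability $1/\deg(v)$ for each neighbor $w$ of $v$ (including $w=u$). *)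

From HB Require Import structures.
From mathcomp Require Import all_boot all_order all_algebra all_field.
Set Implicit Arguments. Unset Strict Implicit. Unset Printing Implicit Defensive.
Import Order.TTheory GRing.Theory Num.Theory.
Local Open Scope ring_scope.

Definition mx_of (S : finType) (f : S -> S -> algC) : 'M[algC]_#|S| :=
  \matrix_(i, j) f (enum_val i) (enum_val j).

Definition spectrum (m : nat) (A : 'M[algC]_m) : seq algC :=
  sval (closed_field_poly_normal (char_poly A)).

(* Kemeny's constant of a finite Markov chain with transition matrix P:
   sum over eigenvalues rho_2..rho_N (one copy of the eigenvalue 1 removed)
   of 1/(1 - rho_i). *)
Definition kemeny (S : finType) (P : S -> S -> algC) : algC :=
  \sum_(r <- rem 1 (spectrum (mx_of P))) (1 - r)^-1.

Definition simple_graph (T : finType) (e : rel T) : Prop :=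
  symmetric e /\ irreflexive e.

Definition deg (T : finType) (e : rel T) (v : T) : nat := #|[set w | e v w]|.

Definition regular (T : finType) (e : rel T) (d : nat) : Prop :=
  forall v, deg e v = d.

Definition connected_graph (T : finType) (e : rel T) : Prop :=
  forall u v, connect e u v.

Definition arc (T : finType) (e : rel T) : predArgType :=
  {p : T * T | e p.1 p.2}.

(* Simple random walk on arcs: from (u,v) go to (v,w) w.p. 1/deg v. *)
Definition arc_walk (T : finType) (e : rel T) (a b : arc e) : algC :=
  if (sval a).2 == (sval b).1 then ((deg e (sval a).2)%:R)^-1 else 0.

Definition edge_kemeny (T : finType) (e : rel T) : algC := kemeny (@arc_walk T e).

Definition adj (T : finType) (e : rel T) : 'M[algC]_#|T| :=
  mx_of (fun u v => (e u v)%:R).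

From Pilot Require Import Defs.
From mathcomp Require Import all_boot all_order all_algebra all_field.
Set Implicit Arguments.
Unset Strict Implicit.
Unset Printing Implicit Defensive.
Import GRing.Theory Num.Theory.
Local Open Scope ring_scope.

(* The arc walk factors as P = S R, where S (arcs x vertices) records the head
   of an arc and R (vertices x arcs) leaves a vertex along a uniformly chosen
   arc; the reversed product R S is the simple random walk D^-1 A on vertices.
   By Sylvester's identity X^n det (X - S R) = X^m det (X - R S), the spectrum
   of P is that of D^-1 A together with m - n zeros (m arcs, n vertices), and
   each zero contributes 1 / (1 - 0) = 1 to Kemeny's constant. For a d-regular
   graph D^-1 A = A / d and m = n d, so 1 / (1 - l / d) = d / (d - l). *)

Lemma char_poly_mulmxC (R : comNzRingType) m n
    (S : 'M[R]_(m, n)) (Q : 'M[R]_(n, m)) :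
  'X^n * char_poly (S *m Q) = 'X^m * char_poly (Q *m S).
Proof.
pose Sp := map_mx polyC S; pose Qp := map_mx polyC Q.
pose M := block_mx ('X%:M : 'M_m) Sp Qp (1%:M : 'M_n).
have M_lu :
    M = block_mx 1%:M Sp 0 1%:M *m block_mx ('X%:M - Sp *m Qp) 0 Qp 1%:M.
  by rewrite mulmx_block ?mul1mx ?mul0mx ?mulmx0 ?mulmx1 ?add0r ?addr0 subrK.
have M_ul :
    M *m block_mx 1%:M (- Sp) 0 'X%:M = block_mx 'X%:M 0 Qp ('X%:M - Qp *m Sp).
  rewrite mulmx_block ?mulmx1 ?mulmx0 ?mul0mx ?addr0 ?add0r.
  by rewrite !mul_scalar_mx mul_mx_scalar scale1r mulmxN scalerN addNr addrC.
have := congr1 determinant M_ul.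
rewrite det_mulmx det_ublock det_lblock !det_scalar.
rewrite M_lu det_mulmx det_ublock det_lblock.
rewrite !det1 !expr1n !mul1r mulr1 /char_poly /char_poly_mx !map_mxM.
by rewrite mulrC => ->.
Qed.

Lemma sumr_rem_eq0 (I : eqType) (V : nmodType) (s : seq I) x (F : I -> V) :
  F x = 0 -> \sum_(y <- rem x s) F y = \sum_(y <- s) F y.
Proof.
move=> Fx0; have [xs | /rem_id -> //] := boolP (x \in s).
by rewrite [RHS](big_rem _ xs) /= Fx0 add0r.
Qed.

Lemma char_poly_spectrum m (A : 'M[algC]_m) :
  char_poly A = \prod_(z <- spectrum A) ('X - z%:P).
Proof.
rewrite /spectrum; case: closed_field_poly_normal => s /= ->.
by rewrite (monicP (char_poly_monic A)) scale1r.
Qed.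

Lemma size_spectrum m (A : 'M[algC]_m) : size (spectrum A) = m.
Proof.
by have := size_char_poly A; rewrite char_poly_spectrum size_prod_XsubC => -[].
Qed.

Lemma perm_spectrum_mulmxC m n (S : 'M[algC]_(m, n)) (Q : 'M[algC]_(n, m)) :
  perm_eq (spectrum (S *m Q) ++ nseq n 0) (spectrum (Q *m S) ++ nseq m 0).
Proof.
apply: prod_XsubC_eq; rewrite !big_cat /= -!char_poly_spectrum !big_nseq.
by rewrite subr0 !iter_mulr_1 ![char_poly _ * _]mulrC char_poly_mulmxC.
Qed.

Lemma perm_spectrum_scale m (c : algC) (A : 'M[algC]_m) : c != 0 ->
  perm_eq (spectrum (c *: A)) (map ( *%R c) (spectrum A)).
Proof.
move=> c_neq0; apply: prod_XsubC_eq; rewrite -char_poly_spectrum big_map.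
(* Substituting X / c for X turns X - A into (X - c A) / c. *)
pose Xc : {poly algC} := c^-1%:P * 'X.
have XcE z : Xc - z%:P = c^-1%:P * ('X - (c * z)%:P).
  by rewrite mulrBr -polyCM mulKf.
have char_mx_Xc :
    map_mx (comp_poly Xc) (char_poly_mx A) = c^-1%:P *: char_poly_mx (c *: A).
  apply/matrixP => i j; rewrite !mxE comp_polyB comp_polyC.
  case: (i == j); rewrite /= ?mulr1n ?mulr0n ?comp_polyX ?comp_poly0 ?sub0r.
    by rewrite XcE.
  by rewrite mulrN -polyCM mulKf.
have := congr1 determinant char_mx_Xc.
rewrite det_map_mx detZ -/(char_poly A) -/(char_poly (c *: A)).
rewrite char_poly_spectrum rmorph_prod.
under eq_bigr => z _ do rewrite /= comp_polyB comp_polyX comp_polyC XcE.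
rewrite big_split /= big_const_seq count_predT size_spectrum iter_mulr_1.
by move/mulfI => -> //; rewrite expf_neq0 // polyC_eq0 invr_eq0.
Qed.

Definition mx_of_fun (R : Type) (A B : finType) (f : A -> B -> R) :
  'M[R]_(#|A|, #|B|) :=
  \matrix_(i, j) f (enum_val i) (enum_val j).

Lemma mx_of_fun_mul (R : pzSemiRingType) (A B C : finType)
    (f : A -> B -> R) (g : B -> C -> R) :
  mx_of_fun f *m mx_of_fun g = mx_of_fun (fun a c => \sum_b f a b * g b c).
Proof.
apply/matrixP => i j; rewrite !mxE (big_enum_val (fun b => f _ b * g b _)) /=.
by apply: eq_bigr => k _; rewrite !mxE.
Qed.

Lemma sumr_pred1 (R : pzSemiRingType) (I : finType) (x : I) (F : I -> R) :
  \sum_i (x == i)%:R * F i = F x.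
Proof.
under eq_bigr do rewrite mulr_natl mulrb.
by rewrite -big_mkcond (big_pred1 x) // => i; rewrite /= eq_sym.
Qed.

(* The removed eigenvalue 1 would contribute 1 / 0 = 0 anyway. *)
Lemma kemenyE (S : finType) (P : S -> S -> algC) :
  kemeny P = \sum_(r <- spectrum (mx_of P)) (1 - r)^-1.
Proof. by rewrite /kemeny sumr_rem_eq0 // subrr invr0. Qed.

Section ArcWalk.
Variables (T : finType) (e : rel T).
Local Notation arc := (Defs.arc e).

Definition head_of (a : arc) (v : T) : algC := ((sval a).2 == v)%:R.
Definition out_walk (v : T) (a : arc) : algC :=
  ((sval a).1 == v)%:R / (deg e v)%:R.
Definition vertex_walk (u v : T) : algC := (e u v)%:R / (deg e u)%:R.

Lemma sumr_arc_pred1 (p : T * T) :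
  \sum_(a : arc) (sval a == p)%:R = (e p.1 p.2)%:R :> algC.
Proof.
rewrite -(big_sub [pred q : T * T | e q.1 q.2] (fun q => (q == p)%:R)).
rewrite big_mkcond -(sumr_pred1 p (fun q => (e q.1 q.2)%:R)).
apply: eq_bigr => q _; rewrite inE eq_sym.
by case: (e q.1 q.2); rewrite ?mulr1 ?mulr0.
Qed.

Lemma arc_walk_mx :
  mx_of (@arc_walk T e) = mx_of_fun head_of *m mx_of_fun out_walk.
Proof.
rewrite mx_of_fun_mul; apply/matrixP => i j.
rewrite !mxE sumr_pred1 /arc_walk /out_walk.
by rewrite eq_sym; case: eqP => [<-|_]; rewrite ?mul1r ?mul0r.
Qed.

Lemma vertex_walk_mx :
  mx_of vertex_walk = mx_of_fun out_walk *m mx_of_fun head_of.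
Proof.
rewrite mx_of_fun_mul; apply/matrixP => i j; rewrite !mxE /vertex_walk.
under eq_bigr do rewrite mulrAC -natrM.
rewrite -mulr_suml -(sumr_arc_pred1 (enum_val i, enum_val j)); congr (_ / _).
by apply: eq_bigr => -[[x y] exy] _; rewrite /= xpair_eqE mulnb.
Qed.

Lemma card_arc : #|arc| = (\sum_u deg e u)%N.
Proof.
rewrite card_sig -sum1_card /deg; under [RHS]eq_bigr do rewrite -sum1_card.
by rewrite pair_big_dep /=; apply: eq_bigl => -[u w]; rewrite !inE.
Qed.

Lemma edge_kemenyE : edge_kemeny e + #|T|%:R = #|arc|%:R + kemeny vertex_walk.
Proof.
rewrite /edge_kemeny !kemenyE arc_walk_mx vertex_walk_mx.
have := perm_big (op := +%R) (x := 0) (P := predT) (F := fun r => (1 - r)^-1) _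
  (perm_spectrum_mulmxC (mx_of_fun head_of) (mx_of_fun out_walk)).
by rewrite !big_cat /= !big_nseq !iter_addr_0 subr0 invr1 => ->; rewrite addrC.
Qed.

Variable d : nat.
Hypothesis reg : regular e d.

Lemma vertex_walk_regular : mx_of vertex_walk = d%:R^-1 *: adj e.
Proof. by apply/matrixP => i j; rewrite !mxE /vertex_walk reg mulrC. Qed.

Lemma kemeny_vertex_walk_regular : (0 < d)%N ->
  kemeny vertex_walk =
    \sum_(l <- rem d%:R (spectrum (adj e))) d%:R / (d%:R - l).
Proof.
move=> d_gt0; have d_neq0 : d%:R != 0 :> algC by rewrite pnatr_eq0 -lt0n.
rewrite kemenyE vertex_walk_regular.
rewrite (perm_big _ (perm_spectrum_scale _ _)) ?invr_eq0 // big_map.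
rewrite sumr_rem_eq0 ?subrr ?invr0 ?mulr0 //; apply: eq_bigr => l _.
have -> : 1 - d%:R^-1 * l = d%:R^-1 * (d%:R - l) by rewrite mulrBr mulVf.
by rewrite invfM invrK mulrC.
Qed.

End ArcWalk.

Theorem lemma3p1 (T : finType) (e : rel T) (d : nat) :
  simple_graph e -> connected_graph e -> regular e d -> (3 <= d)%N ->
  edge_kemeny e =
    (#|T| * (d - 1))%:R
    + \sum_(l <- rem (d%:R : algC) (spectrum (adj e))) d%:R / (d%:R - l).
Proof.
move=> _ _ reg d_ge3; have d_gt0 : (0 < d)%N by apply: leq_trans d_ge3.
apply: (addIr #|T|%:R).
rewrite edge_kemenyE (kemeny_vertex_walk_regular reg d_gt0).
rewrite card_arc (eq_bigr _ (fun u _ => reg u)) sum_nat_const.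
by rewrite addrAC -natrD -mulnSr subn1 prednK.
Qed.
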